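(* Let $\underline{R}=(R_1,\ldots,R_n)$ be an $n$-tuple of bounded operators on a Hilbert space $\mathcal{L}$. For $1\le i,j\le n$ let $\mathcal{K}_{ij}=\overline{\mathrm{span}}\{\underline{R}^\alpha(R_iR_j-R_jR_i)h: h\in\mathcal{L},\alpha\in\tilde\Lambda\}$ and $\mathcal{K}=\overline{\mathrm{span}}\bigcup_{i,j=1}^n\mathcal{K}_{ij}$. Then $\mathcal{L}^c(\underline{R})=\mathcal{K}^\perp$. Equivalently, $\mathcal{L}^c(\underline{R})=\{h\in\mathcal{L}:(R_i^*R_j^*-R_j^*R_i^* )(\underline{R}^\alpha)^*h=0\ \forall\,1\le i,j\le n,\ \alpha\in\tilde\Lambda\}$.
   Context: $\Lambda=\{1,\ldots,n\}$, $\tilde\Lambda=\bigcup_{m\ge0}\Lambda^m$ with $\Lambda^0=\{0\}$; $\underline{R}^\alpha=R_{\alpha_1}\cdots R_{\alpha_m}$ and $\underline{R}^0=I$. $\mathcal{L}^c(\underline{R})$ denotes the largest element of the collection of closed subspaces $\mathcal{M}\subseteq\mathcal{L}$ that are invariant under every $R_i^*$ and satisfy $R_i^*R_j^*h=R_j^*R_i^*h$ for all $h\in\mathcal{M}$ and all $i,j$ (this collection is closed under arbitrary intersections and closed spans of unions, hence has a largest element). *)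

(* Complex Hilbert spaces are set up
   by hand: a complete normed module over C = R[i] whose norm comes from an
   inner product (linear in the first argument). *)
From mathcomp Require Import all_boot all_order all_algebra complex.
From mathcomp Require Import all_classical all_reals all_analysis.
Set Implicit Arguments. Unset Strict Implicit. Unset Printing Implicit Defensive.
Import Order.TTheory GRing.Theory Num.Theory numFieldNormedType.Exports.
Local Open Scope ring_scope.
Local Open Scope classical_set_scope.

Section HilbertDefs.
Variables (R : realType) (V : completeNormedModType R[i]).

Definition is_inner_product (ip : V -> V -> R[i]) : Prop :=
  [/\ (forall (a : R[i]) (x y z : V), ip (a *: x + y) z = a * ip x z + ip y z),
      (forall x y : V, ip y x = (ip x y)^*)
    & (forall x : V, `|x| ^+ 2 = ip x x)].

Definition is_adjoint (ip : V -> V -> R[i]) (T S : V -> V) : Prop :=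
  forall x y : V, ip (T x) y = ip x (S y).

Definition bounded_op (T : V -> V) : Prop :=
  (forall (a : R[i]) (x y : V), T (a *: x + y) = a *: T x + T y) /\ continuous T.

Definition closed_subspace (M : set V) : Prop :=
  [/\ closed M, M 0 & forall (a : R[i]) (x y : V), M x -> M y -> M (a *: x + y)].

Definition span (S : set V) : set V :=
  [set x | exists (m : nat) (c : 'I_m -> R[i]) (v : 'I_m -> V),
             (forall k, S (v k)) /\ x = \sum_(k < m) c k *: v k].

Definition closed_span (S : set V) : set V := closure (span S).

Definition orth (ip : V -> V -> R[i]) (S : set V) : set V :=
  [set h | forall k, S k -> ip k h = 0].

(* R^alpha = R_{alpha_1} ... R_{alpha_m}, R^{[::]} = I;
   words alpha in tilde Lambda are sequences over 'I_n (the empty word is 0) *)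
Definition word_op (n : nat) (T : 'I_n -> V -> V) (alpha : seq 'I_n) (h : V) : V :=
  foldr (fun i x => T i x) h alpha.

(* closed subspaces M invariant under every R_i^* on which the R_i^* commute *)
Definition Lc_admissible (n : nat) (Rs : 'I_n -> V -> V) (M : set V) : Prop :=
  [/\ closed_subspace M,
      (forall i h, M h -> M (Rs i h))
    & (forall i j h, M h -> Rs i (Rs j h) = Rs j (Rs i h))].

Definition is_Lc (n : nat) (Rs : 'I_n -> V -> V) (M : set V) : Prop :=
  Lc_admissible Rs M /\ forall M', Lc_admissible Rs M' -> M' `<=` M.

Definition Kij (n : nat) (T : 'I_n -> V -> V) (i j : 'I_n) : set V :=
  closed_span [set x | exists (h : V) (alpha : seq 'I_n),
                 x = word_op T alpha (T i (T j h) - T j (T i h))].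

Definition Kall (n : nat) (T : 'I_n -> V -> V) : set V :=
  closed_span [set x | exists i j, Kij T i j x].

End HilbertDefs.

(* Since R_i^* is adjoint to R_i, <R^a (R_i R_j - R_j R_i) x, h> equals
   <x, [R_j^*, R_i^*] (R^a)^* h>, so h is orthogonal to K exactly when every
   commutator of the R_i^* kills every (R^a)^* h.  That set is invariant under
   the R_i^* (append a letter to the word) and the R_i^* commute on it (empty
   word); conversely every invariant subspace on which the R_i^* commute lies
   in it.  Being an orthogonal complement, it is closed. *)
From Pilot Require Import Defs.
From mathcomp Require Import all_boot all_order all_algebra complex.
From mathcomp Require Import all_classical all_reals all_analysis.
From mathcomp Require Import ring.
Import Order.TTheory GRing.Theory Num.Theory numFieldNormedType.Exports.
Local Open Scope ring_scope.
Local Open Scope classical_set_scope.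

Section CommutatorKernel.
Variables (R : realType) (V : completeNormedModType R[i]).
Variables (n : nat) (T : 'I_n -> V -> V).

Definition word_commutator_kernel : set V :=
  [set h | forall (i j : 'I_n) (alpha : seq 'I_n),
     T i (T j (word_op T (rev alpha) h)) - T j (T i (word_op T (rev alpha) h)) = 0].

Lemma word_op_rev_cons i alpha h :
  word_op T (rev (i :: alpha)) h = word_op T (rev alpha) (T i h).
Proof. by rewrite rev_cons /word_op foldr_rcons. Qed.

Lemma word_commutator_kernel_invariant i h :
  word_commutator_kernel h -> word_commutator_kernel (T i h).
Proof. by move=> Kh i' j' alpha; rewrite -!word_op_rev_cons; apply: Kh. Qed.

Lemma word_commutator_kernel_commute i j h :
  word_commutator_kernel h -> T i (T j h) = T j (T i h).
Proof. by move=> Kh; apply/eqP; rewrite -subr_eq0; apply/eqP; exact: (Kh i j [::]). Qed.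

Lemma Lc_admissible_sub_word_commutator_kernel M :
  Lc_admissible T M -> M `<=` word_commutator_kernel.
Proof.
move=> [_ Minv Mcomm] h Mh i j alpha.
have Mword s : M (word_op T s h) by elim: s => [|a s IH] //=; apply: Minv.
by rewrite Mcomm ?subrr.
Qed.

Lemma is_Lc_word_commutator_kernel :
  closed_subspace word_commutator_kernel -> is_Lc T word_commutator_kernel.
Proof.
move=> Kclosed; split; last exact: Lc_admissible_sub_word_commutator_kernel.
split=> //; [exact: word_commutator_kernel_invariant
            | exact: word_commutator_kernel_commute].
Qed.

End CommutatorKernel.

Arguments word_commutator_kernel {R V n}.

Section InnerProduct.
Variables (R : realType) (V : completeNormedModType R[i]) (ip : V -> V -> R[i]).
Hypothesis ipP : is_inner_product ip.

Lemma ip0l z : ip 0 z = 0.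
Proof.
have [ipDZ _ _] := ipP; have := ipDZ 1 0 0 z.
rewrite scaler0 addr0 mul1r => /(congr1 (fun t => t - ip 0 z)).
by rewrite subrr addrK.
Qed.

Lemma ipDl x y z : ip (x + y) z = ip x z + ip y z.
Proof. by have [ipDZ _ _] := ipP; rewrite -[x]scale1r ipDZ mul1r scale1r. Qed.

Lemma ipZl a x z : ip (a *: x) z = a * ip x z.
Proof. by have [ipDZ _ _] := ipP; rewrite -[a *: x]addr0 ipDZ ip0l addr0. Qed.

Lemma ipBl x y z : ip (x - y) z = ip x z - ip y z.
Proof. by rewrite ipDl -scaleN1r ipZl mulN1r. Qed.

Lemma ip_conj x y : ip y x = (ip x y)^*.
Proof. by have [_ ipC _] := ipP; apply: ipC. Qed.

Lemma ip0r z : ip z 0 = 0.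
Proof. by rewrite ip_conj ip0l conjC0. Qed.

Lemma ipDr x y z : ip z (x + y) = ip z x + ip z y.
Proof. by rewrite ip_conj ipDl rmorphD /= -!ip_conj. Qed.

Lemma ipZr a x z : ip z (a *: x) = a^* * ip z x.
Proof. by rewrite ip_conj ipZl rmorphM /= -!ip_conj. Qed.

Lemma ipBr x y z : ip z (x - y) = ip z x - ip z y.
Proof. by rewrite ipDr -scaleN1r ipZr conjCN1 mulN1r. Qed.

Lemma ip_nondegenerate w : (forall x, ip x w = 0) -> w = 0.
Proof.
have [_ _ ipN] := ipP => /(_ w); rewrite -ipN => /eqP.
by rewrite expf_eq0 /= normr_eq0 => /eqP.
Qed.

Lemma sqr_norm_add_scale c x h :
  `|x + c *: h| ^+ 2 = ip x x + c^* * ip x h + c * ip h x + c * c^* * ip h h.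
Proof.
have [_ _ ipN] := ipP.
by rewrite ipN ipDl !ipDr !ipZl !ipZr; ring.
Qed.

Lemma polarization x h :
  ip x h = 4^-1 * ((`|x + 1 *: h| ^+ 2 - `|x + (-1) *: h| ^+ 2)
                   + 'i * (`|x + 'i *: h| ^+ 2 - `|x + (- 'i) *: h| ^+ 2)).
Proof.
rewrite !sqr_norm_add_scale conjC1 conjCN1 rmorphN /= conjCi opprK.
(* [ring] cannot use ['i ^+ 2 = -1], so isolate a multiple of ['i ^+ 2 + 1]. *)
have -> : forall A B C D : R[i],
    A + 1 * B + 1 * C + 1 * 1 * D - (A + -1 * B + -1 * C + -1 * -1 * D) +
    'i * (A + - 'i * B + 'i * C + 'i * - 'i * D
          - (A + 'i * B + - 'i * C + - 'i * 'i * D))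
    = 4 * B + 2 * (C - B) * ('i ^+ 2 + 1).
  by move=> A B C D; ring.
by rewrite sqrCi addNr mulr0 addr0 mulrA mulVf ?mul1r.
Qed.

Lemma continuous_ipl h : continuous ((fun x => ip x h) : V -> (R[i] : numFieldType)).
Proof.
have sqr_norm_cont c : continuous
    ((fun x : V => `|x + c *: h| ^+ 2) : V -> (R[i] : numFieldType)).
  move=> x; have normc : (`|y + c *: h| : (R[i] : numFieldType)) @[y --> x]
      --> (`|x + c *: h| : (R[i] : numFieldType)).
    by apply: cvg_norm; apply: cvgD; [exact: cvg_id | exact: cvg_cst].
  exact: (cvgM normc normc).
rewrite (funext (polarization ^~ h)) => x.
apply: cvgM; first exact: cvg_cst.
apply: cvgD; first by apply: cvgB; apply: sqr_norm_cont.
apply: cvgM; first exact: cvg_cst.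
by apply: cvgB; apply: sqr_norm_cont.
Qed.

Lemma closed_ipl_eq0 h : closed [set x | ip x h = 0].
Proof.
rewrite (_ : [set x | _] =
  ((fun x => ip x h) : V -> (R[i] : numFieldType)) @^-1` [set 0]) //.
apply: preimage_closed; first by move=> x _; exact: continuous_ipl.
apply: (iffLR accessible_finite_set_closed); last exact: finite_set1.
exact/hausdorff_accessible/norm_hausdorff.
Qed.

Lemma subset_closure_span (G : set V) : G `<=` closed_span G.
Proof.
move=> g Gg; apply: subset_closure.
exists 1%N, (fun _ => 1), (fun _ => g); split => //.
by rewrite big_ord1 scale1r.
Qed.

Lemma closed_span_ipl_eq0 (G : set V) h :
  (forall g, G g -> ip g h = 0) -> forall k, closed_span G k -> ip k h = 0.
Proof.
move=> Gh k; have spanh : Defs.span G `<=` [set x | ip x h = 0].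
  move=> x [m [c [v [Gv ->]]]] /=.
  apply: (big_ind (fun x => ip x h = 0)); first exact: ip0l.
    by move=> a b ah bh; rewrite ipDl ah bh addr0.
  by move=> l _; rewrite ipZl Gh // mulr0.
move=> /(closureS spanh).
by rewrite -(closure_id _).1 //; exact: closed_ipl_eq0.
Qed.

Lemma orth_closed_subspace (S : set V) : closed_subspace (orth ip S).
Proof.
split.
- rewrite (_ : orth ip S = \bigcap_(k in S) [set h | ip h k = 0]).
    by apply: closed_bigI => k _; exact: closed_ipl_eq0.
  apply/seteqP; split => h Sh k Sk; rewrite /= ip_conj.
    by rewrite Sh // conjC0.
  by rewrite (Sh k Sk) conjC0.
- by move=> k _; rewrite ip0r.
- by move=> a x y Sx Sy k Sk; rewrite ipDr ipZr Sx // Sy // mulr0 addr0.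
Qed.

Variables (n : nat) (T Ts : 'I_n -> V -> V).
Hypothesis adjT : forall i, is_adjoint ip (T i) (Ts i).

Lemma word_op_adjoint alpha x y :
  ip (word_op T alpha x) y = ip x (word_op Ts (rev alpha) y).
Proof.
elim: alpha x y => [|a alpha IH] x y //=.
by rewrite adjT IH word_op_rev_cons.
Qed.

Lemma commutator_word_adjoint i j alpha x y :
  ip (word_op T alpha (T i (T j x) - T j (T i x))) y =
  ip x (Ts j (Ts i (word_op Ts (rev alpha) y))
        - Ts i (Ts j (word_op Ts (rev alpha) y))).
Proof. by rewrite word_op_adjoint ipBl !adjT ipBr. Qed.

Lemma orth_Kall : orth ip (Kall T) = word_commutator_kernel Ts.
Proof.
apply/seteqP; split => h /= Kh.
- move=> i j alpha; apply: ip_nondegenerate => x.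
  rewrite -commutator_word_adjoint; apply: Kh.
  apply: subset_closure_span; exists j, i; apply: subset_closure_span.
  by exists x, alpha.
- move=> k; apply: closed_span_ipl_eq0 => g [i [j Kij_g]].
  move: Kij_g; apply: closed_span_ipl_eq0 => _ [x [alpha ->]].
  by rewrite commutator_word_adjoint Kh ip0r.
Qed.

End InnerProduct.

Theorem proposition4 (R : realType) (V : completeNormedModType R[i])
    (ip : V -> V -> R[i]) (n : nat) (Rop Rs : 'I_n -> V -> V) :
  is_inner_product ip ->
  (forall i, bounded_op (Rop i)) ->
  (forall i, is_adjoint ip (Rop i) (Rs i)) ->
  is_Lc Rs (orth ip (Kall Rop)) /\
  orth ip (Kall Rop) =
    [set h | forall (i j : 'I_n) (alpha : seq 'I_n),
       Rs i (Rs j (word_op Rs (rev alpha) h))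
       - Rs j (Rs i (word_op Rs (rev alpha) h)) = 0].
Proof.
move=> ipP _ adjR.
have orthK : orth ip (Kall Rop) = word_commutator_kernel Rs by exact: orth_Kall.
split; last exact: orthK.
rewrite orthK; apply: is_Lc_word_commutator_kernel.
by rewrite -orthK; exact: orth_closed_subspace.
Qed.
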